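(* Let $\mathbf{H}$ be a fourth-order harmonic tensor on $\mathbb{R}^3$ (totally symmetric and traceless) which is cubic. Consider the linear equation \[ \operatorname{tr}(\mathbf{H}\times \mathbf{a}) = 0 \] in the unknown second-order symmetric tensor $\mathbf{a}$, where in any direct orthonormal basis \[ (\operatorname{tr}(\mathbf{H}\times\mathbf{a}))_{ijk} = \frac{1}{10}\left(\varepsilon_{ipq}H_{jkpr}+\varepsilon_{jpq}H_{ikpr}+\varepsilon_{kpq}H_{ijpr}\right)a_{qr}. \] Then the set of solutions $\mathbf{a}$ is a three-dimensional vector space. Moreover, the orthotropic tensors among these solutions form a dense open subset of this solution space, and for any orthotropic solution $\mathbf{a}$, every natural basis of $\mathbf{a}$ is a natural basis for $\mathbf{H}$.
   Context: $\mathrm{SO}(3)$ acts on tensors by $(g\star\mathbf{T})_{i_1\dots i_n}=g_{i_1j_1}\cdots g_{i_nj_n}T_{j_1\dots j_n}$. $\varepsilon_{ijk}$ is the Levi-Civita tensor, $\varepsilon_{ijk}=\det(\mathbf{e}_i,\mathbf{e}_j,\mathbf{e}_k)$ in a direct orthonormal basis. The symmetry group of a tensor is the subgroup of $\mathrm{SO}(3)$ fixing it. A fourth-order tensor $\mathbf{H}$ is called cubic if its symmetry group is conjugate in $\mathrm{SO}(3)$ to the octahedral group (the orientation-preserving symmetry group of the cube with vertices $(\pm1,\pm1,\pm1)$). A natural basis for a cubic $\mathbf{H}$ is a direct orthonormal basis $(\mathbf{u}_1,\mathbf{u}_2,\mathbf{u}_3)$ such that the symmetry group of $\mathbf{H}$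 is exactly the group of orientation-preserving symmetries of the cube with vertices $\pm\mathbf{u}_1\pm\mathbf{u}_2\pm\mathbf{u}_3$ (equivalently, the components of $\mathbf{H}$ in that basis are of cubic normal form, all components vanishing except those of type $H_{iiii}$, $H_{iijj}$, $H_{ijij}$, with $H_{1111}=H_{2222}=H_{3333}$ and $H_{1122}=H_{1133}=H_{2233}=H_{1212}=H_{1313}=H_{2323}$). A second-order symmetric tensor is orthotropic if it has three distinct eigenvalues; a natural basis for such a tensor is a direct orthonormal basis of its eigenvectors. *)

From HB Require Import structures.
From mathcomp Require Import all_boot all_order all_algebra all_fingroup.
From mathcomp Require Import reals.
Set Implicit Arguments. Unset Strict Implicit. Unset Printing Implicit Defensive.
Import Order.TTheory GRing.Theory Num.Theory.
Local Open Scope ring_scope.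

Section Defs.
Variable R : realType.

(* components of tensors in the standard (direct orthonormal) basis *)
Definition tensor4 := 'I_3 -> 'I_3 -> 'I_3 -> 'I_3 -> R.
Definition tensor3 := 'I_3 -> 'I_3 -> 'I_3 -> R.

Definition SO3 (g : 'M[R]_3) : Prop := g *m g^T = 1%:M /\ \det g = 1.

Definition act4 (g : 'M[R]_3) (H : tensor4) : tensor4 :=
  fun i1 i2 i3 i4 => \sum_(j1 < 3) \sum_(j2 < 3) \sum_(j3 < 3) \sum_(j4 < 3)
    g i1 j1 * g i2 j2 * g i3 j3 * g i4 j4 * H j1 j2 j3 j4.

Definition sym_group (H : tensor4) (g : 'M[R]_3) : Prop :=
  SO3 g /\ forall i j k l, act4 g H i j k l = H i j k l.

Definition tapp (H : tensor4) (x : 'I_4 -> 'I_3) : R :=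
  H (x (inord 0)) (x (inord 1)) (x (inord 2)) (x (inord 3)).
Definition totally_symmetric (H : tensor4) : Prop :=
  forall (s : 'S_4) (x : 'I_4 -> 'I_3), tapp H (x \o s) = tapp H x.
Definition traceless (H : tensor4) : Prop :=
  forall k l, \sum_(i < 3) H i i k l = 0.
Definition harmonic4 (H : tensor4) : Prop := totally_symmetric H /\ traceless H.

(* Levi-Civita: eps_ijk = det(e_i, e_j, e_k) *)
Definition levi (i j k : 'I_3) : R :=
  let f := fun c : 'I_3 => if val c == 0%N then i else if val c == 1%N then j else k in
  \det (\matrix_(r < 3, c < 3) ((r == f c)%:R : R)).

(* cube with vertices +-u1 +-u2 +-u3, u_i = columns of U *)
Definition sign_vec (s : 'cV[R]_3) : Prop := forall i, s i 0 = 1 \/ s i 0 = -1.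
Definition cube_vertex (U : 'M[R]_3) (v : 'cV[R]_3) : Prop :=
  exists s, sign_vec s /\ v = U *m s.
Definition cube_rot (U : 'M[R]_3) (g : 'M[R]_3) : Prop :=
  SO3 g /\ forall v, cube_vertex U v -> cube_vertex U (g *m v).
Definition octahedral (g : 'M[R]_3) : Prop := cube_rot 1%:M g.

Definition cubic (H : tensor4) : Prop :=
  exists P, SO3 P /\
    forall g, sym_group H g <-> exists o, octahedral o /\ g = P *m o *m P^T.

Definition natural_basis4 (H : tensor4) (U : 'M[R]_3) : Prop :=
  SO3 U /\ forall g, sym_group H g <-> cube_rot U g.

Definition trHx (H : tensor4) (a : 'M[R]_3) : tensor3 :=
  fun i j k => 10%:R^-1 * \sum_(p < 3) \sum_(q < 3) \sum_(r < 3)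
    (levi i p q * H j k p r + levi j p q * H i k p r + levi k p q * H i j p r) * a q r.

Definition symmetric2 (a : 'M[R]_3) : Prop := a^T = a.

Definition solution (H : tensor4) (a : 'M[R]_3) : Prop :=
  symmetric2 a /\ forall i j k, trHx H a i j k = 0.

Definition orthotropic (a : 'M[R]_3) : Prop :=
  symmetric2 a /\ exists l1 l2 l3 : R,
    [/\ l1 != l2, l1 != l3 & l2 != l3] /\
    [/\ eigenvalue a l1, eigenvalue a l2 & eigenvalue a l3].

Definition natural_basis2 (a U : 'M[R]_3) : Prop :=
  SO3 U /\ forall i : 'I_3, exists l : R, a *m col i U = l *: col i U.

Definition dim3_subspace (P : 'M[R]_3 -> Prop) : Prop :=
  exists a1 a2 a3, [/\ P a1, P a2, P a3,
    (forall c1 c2 c3 : R, c1 *: a1 + c2 *: a2 + c3 *: a3 = 0 ->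
       [/\ c1 = 0, c2 = 0 & c3 = 0]) &
    (forall a, P a <-> exists c1 c2 c3 : R, a = c1 *: a1 + c2 *: a2 + c3 *: a3)].

Definition mx_close (a b : 'M[R]_3) (e : R) : Prop :=
  forall i j, `|a i j - b i j| < e.

Definition open_in (P Q : 'M[R]_3 -> Prop) : Prop :=
  forall a, P a -> Q a -> exists2 e : R, 0 < e &
    forall b, P b -> mx_close a b e -> Q b.
Definition dense_in (P Q : 'M[R]_3 -> Prop) : Prop :=
  forall a, P a -> forall e : R, 0 < e -> exists b, [/\ P b, Q b & mx_close a b e].

End Defs.

From HB Require Import structures.
From mathcomp Require Import all_boot all_order all_algebra all_fingroup.
From mathcomp Require Import reals.
From mathcomp Require Import ring lra.
Set Implicit Arguments. Unset Strict Implicit. Unset Printing Implicit Defensive.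
Import Order.TTheory GRing.Theory Num.Theory.
Local Open Scope ring_scope.

(* In a suitable rotated frame P, a cubic harmonic tensor is lam * C, where C is the
   cubic normal form and lam != 0 (H = 0 would be fixed by all of SO(3)).  The map
   (H, a) |-> tr(H x a) is SO(3)-equivariant, and for lam * C the equation forces a to
   be diagonal, so the solutions are exactly P diag(c1, c2, c3) P^T: a 3-dimensional
   space.  Such a solution is orthotropic iff the c_i are distinct, an open and dense
   condition.  Its unit eigenvectors are then the columns of P up to sign and order,
   so any of its eigenbases spans the same cube as P, whose rotation group is the
   symmetry group of H. *)

Definition o0 : 'I_3 := @Ordinal 3 0 isT.
Definition o1 : 'I_3 := @Ordinal 3 1 isT.
Definition o2 : 'I_3 := @Ordinal 3 2 isT.

Lemma ord3P (i : 'I_3) : i = o0 \/ i = o1 \/ i = o2.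
Proof.
case: i => [[|[|[|n]]] Hn]; [left|right;left|right;right|by []]; exact: val_inj.
Qed.

Definition ord3_neqE :=
  (erefl : (o0 == o1) = false, erefl : (o0 == o2) = false,
   erefl : (o1 == o0) = false, erefl : (o1 == o2) = false,
   erefl : (o2 == o0) = false, erefl : (o2 == o1) = false).

Lemma sum3 (V : nmodType) (F : 'I_3 -> V) : \sum_(i < 3) F i = F o0 + F o1 + F o2.
Proof.
rewrite !big_ord_recl big_ord0 addr0 addrA.
congr (F _ + F _ + F _); exact: val_inj.
Qed.

Lemma sum_delta_l (I : finType) (V : pzSemiRingType) (F : I -> V) (i : I) :
  \sum_j (i == j)%:R * F j = F i.
Proof.
rewrite (bigD1 i) //= eqxx mul1r big1 ?addr0 // => j.
by rewrite eq_sym => /negbTE ->; rewrite mul0r.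
Qed.

Lemma det_mx33 (R : comPzRingType) (A : 'M[R]_3) : \det A =
  A o0 o0 * (A o1 o1 * A o2 o2 - A o1 o2 * A o2 o1)
  - A o0 o1 * (A o1 o0 * A o2 o2 - A o1 o2 * A o2 o0)
  + A o0 o2 * (A o1 o0 * A o2 o1 - A o1 o1 * A o2 o0).
Proof.
rewrite (expand_det_row _ ord0) !big_ord_recl big_ord0 /cofactor.
rewrite !(expand_det_row _ ord0) !big_ord_recl !big_ord0 /cofactor !det_mx11.
(* Index entries by numerals, so that [ring] identifies equal entries behind [lift]s. *)
pose B (m n : nat) := A (inord m) (inord n).
have AB x y : A x y = B x y by rewrite /B !inord_val.
rewrite !mxE !AB /= /bump /=; ring.
Qed.

Section Tensors.
Variable R : realType.
Implicit Types (g h P U : 'M[R]_3) (T K : tensor4 R).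

Ltac tensor_ext := let i := fresh "i" in let j := fresh "j" in
  let k := fresh "k" in let l := fresh "l" in
  apply: boolp.funext => i; apply: boolp.funext => j;
  apply: boolp.funext => k; apply: boolp.funext => l.

Ltac ord3_cases i := case: (ord3P i) => [->|[->|->]].

Definition levi_sign (i j k : nat) : R :=
  match i, j, k with
  | 0, 1, 2 | 1, 2, 0 | 2, 0, 1 => 1
  | 0, 2, 1 | 2, 1, 0 | 1, 0, 2 => -1
  | _, _, _ => 0 end.

Lemma leviE i j k : levi R i j k = levi_sign i j k.
Proof.
ord3_cases i; ord3_cases j; ord3_cases k;
  rewrite /levi det_mx33 !mxE /= ?eqxx ?ord3_neqE /=; ring.
Qed.

Definition act_at1 g T : tensor4 R := fun i j k l => \sum_(a < 3) g i a * T a j k l.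
Definition act_at2 g T : tensor4 R := fun i j k l => \sum_(a < 3) g j a * T i a k l.
Definition act_at3 g T : tensor4 R := fun i j k l => \sum_(a < 3) g k a * T i j a l.
Definition act_at4 g T : tensor4 R := fun i j k l => \sum_(a < 3) g l a * T i j k a.

Lemma act4_at g T : act4 g T = act_at1 g (act_at2 g (act_at3 g (act_at4 g T))).
Proof.
tensor_ext; rewrite /act4 /act_at1 /act_at2 /act_at3 /act_at4.
apply: eq_bigr => a _; rewrite big_distrr /=; apply: eq_bigr => b _.
rewrite mulrA big_distrr /=; apply: eq_bigr => c _.
rewrite mulrA big_distrr /=; apply: eq_bigr => d _ /=; ring.
Qed.

Ltac act_at_tac := tensor_ext;
  rewrite /act_at1 /act_at2 /act_at3 /act_at4 /=;
  under eq_bigr do rewrite big_distrr /=; rewrite exchange_big /=;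
  apply: eq_bigr => a _; rewrite ?mxE (big_distrr, big_distrl) /=;
  apply: eq_bigr => b _ /=; ring.

Lemma act_at21C g h T : act_at2 g (act_at1 h T) = act_at1 h (act_at2 g T).
Proof. act_at_tac. Qed.
Lemma act_at31C g h T : act_at3 g (act_at1 h T) = act_at1 h (act_at3 g T).
Proof. act_at_tac. Qed.
Lemma act_at41C g h T : act_at4 g (act_at1 h T) = act_at1 h (act_at4 g T).
Proof. act_at_tac. Qed.
Lemma act_at32C g h T : act_at3 g (act_at2 h T) = act_at2 h (act_at3 g T).
Proof. act_at_tac. Qed.
Lemma act_at42C g h T : act_at4 g (act_at2 h T) = act_at2 h (act_at4 g T).
Proof. act_at_tac. Qed.
Lemma act_at43C g h T : act_at4 g (act_at3 h T) = act_at3 h (act_at4 g T).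
Proof. act_at_tac. Qed.

Lemma act_at1M g h T : act_at1 g (act_at1 h T) = act_at1 (g *m h) T.
Proof. act_at_tac. Qed.
Lemma act_at2M g h T : act_at2 g (act_at2 h T) = act_at2 (g *m h) T.
Proof. act_at_tac. Qed.
Lemma act_at3M g h T : act_at3 g (act_at3 h T) = act_at3 (g *m h) T.
Proof. act_at_tac. Qed.
Lemma act_at4M g h T : act_at4 g (act_at4 h T) = act_at4 (g *m h) T.
Proof. act_at_tac. Qed.

Lemma act4M g h T : act4 g (act4 h T) = act4 (g *m h) T.
Proof.
by rewrite !act4_at act_at41C act_at42C act_at43C act_at4M act_at31C act_at32C
  act_at3M act_at21C act_at2M act_at1M.
Qed.

Lemma act4_1 T : act4 1%:M T = T.
Proof.
have e i (F : 'I_3 -> R) : \sum_a (1%:M : 'M[R]_3) i a * F a = F i.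
  by under eq_bigr do rewrite mxE; exact: sum_delta_l.
by rewrite act4_at; tensor_ext; rewrite /act_at1 /act_at2 /act_at3 /act_at4 !e.
Qed.

(** * Rotation equivariance of tr(H x a) *)

Lemma SO3_tr_mul g : SO3 g -> g^T *m g = 1%:M.
Proof. by case=> h _; apply: mulmx1C. Qed.

Lemma SO3_tr g : SO3 g -> SO3 g^T.
Proof. by move=> hg; split; [rewrite trmxK; exact: SO3_tr_mul | rewrite det_tr; case: hg]. Qed.

Lemma SO3_mul g h : SO3 g -> SO3 h -> SO3 (g *m h).
Proof.
move=> [g1 g2] [h1 h2]; split; last by rewrite det_mulmx g2 h2 mulr1.
by rewrite trmx_mul mulmxA -(mulmxA g) h1 mulmx1 g1.
Qed.

Lemma SO3_conjK P (X : 'M[R]_3) : SO3 P -> P^T *m (P *m X *m P^T) *m P = X.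
Proof. by move/SO3_tr_mul=> h; rewrite !mulmxA h mul1mx -mulmxA h mulmx1. Qed.

Lemma SO3_conjVK P (X : 'M[R]_3) : SO3 P -> P *m (P^T *m X *m P) *m P^T = X.
Proof. by case=> h _; rewrite !mulmxA h mul1mx -mulmxA h mulmx1. Qed.

Lemma SO3_adj g : SO3 g -> \adj g = g^T.
Proof.
move=> hg; have [g1 g2] := hg.
by rewrite -[\adj g]mul1mx -(SO3_tr_mul hg) -mulmxA mul_mx_adj g2 mulmx1.
Qed.

Lemma det_mx22 (A : 'M[R]_2) :
  \det A = A ord0 ord0 * A ord_max ord_max - A ord0 ord_max * A ord_max ord0.
Proof.
rewrite (expand_det_row _ ord0) !big_ord_recl big_ord0 /cofactor !det_mx11 !mxE.
pose B (m n : nat) := A (inord m) (inord n).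
have AB x y : A x y = B x y by rewrite /B !inord_val.
rewrite !AB /= /bump /=; ring.
Qed.

Lemma levi_mul2_cofactor (A : 'M[R]_3) i c d :
  \sum_(p < 3) \sum_(q < 3) levi R i p q * A p c * A q d =
  \sum_(a < 3) cofactor A i a * levi R a c d.
Proof.
rewrite !sum3 !leviE /cofactor !det_mx22 !mxE.
pose B (m n : nat) := A (inord m) (inord n).
have AB x y : A x y = B x y by rewrite /B !inord_val.
ord3_cases i; ord3_cases c; ord3_cases d; rewrite !AB /= /bump /=; ring.
Qed.

Lemma levi_mul2_SO3 g i c d : SO3 g ->
  \sum_(p < 3) \sum_(q < 3) levi R i p q * g p c * g q d =
  \sum_(a < 3) g i a * levi R a c d.
Proof.
move=> hg; rewrite levi_mul2_cofactor; apply: eq_bigr => a _.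
by move/matrixP: (SO3_adj hg) => /(_ a i); rewrite !mxE => ->.
Qed.

Definition axial (Z : 'M[R]_3) i := \sum_(p < 3) \sum_(q < 3) levi R i p q * Z p q.

Lemma axial_conj g Z i : SO3 g ->
  axial (g *m Z *m g^T) i = \sum_(a < 3) g i a * axial Z a.
Proof.
move=> hg; transitivity (\sum_(c < 3) \sum_(d < 3) Z c d *
   (\sum_(p < 3) \sum_(q < 3) levi R i p q * g p c * g q d)).
  by rewrite /axial; do 4 rewrite ?sum3 ?mxE; ring.
under eq_bigr do under eq_bigr do rewrite levi_mul2_SO3 //.
by rewrite /axial !sum3; ring.
Qed.

Definition slice K j k : 'M[R]_3 := \matrix_(c, d) K j k c d.

(* [cross_tr K a i j k] is eps_ipq K_jkpr a_qr, the summand of tr(K x a) before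
   symmetrization in i, j, k. *)
Definition cross_tr K a i j k := axial (slice K j k *m a^T) i.

Lemma trHxE K a i j k : trHx K a i j k =
  10%:R^-1 * (cross_tr K a i j k + cross_tr K a j i k + cross_tr K a k i j).
Proof. by rewrite /trHx /cross_tr /axial; do 3 rewrite ?sum3 ?mxE; ring. Qed.

Lemma cross_tr_at1 g K a i j k :
  cross_tr (act_at1 g K) a i j k = \sum_(c < 3) g j c * cross_tr K a i c k.
Proof. by rewrite /cross_tr /axial /act_at1; do 3 rewrite ?sum3 ?mxE; ring. Qed.

Lemma cross_tr_at2 g K a i j k :
  cross_tr (act_at2 g K) a i j k = \sum_(c < 3) g k c * cross_tr K a i j c.
Proof. by rewrite /cross_tr /axial /act_at2; do 3 rewrite ?sum3 ?mxE; ring. Qed.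

Lemma slice_at34 g K j k :
  slice (act_at3 g (act_at4 g K)) j k = g *m slice K j k *m g^T.
Proof.
by apply/matrixP => c d; rewrite /act_at3 /act_at4; do 3 rewrite ?sum3 ?mxE; ring.
Qed.

Lemma cross_tr_at34 g K b i j k : SO3 g ->
  cross_tr (act_at3 g (act_at4 g K)) (g *m b *m g^T) i j k =
  \sum_(a < 3) g i a * cross_tr K b a j k.
Proof.
move=> hg; rewrite /cross_tr slice_at34 -axial_conj //; congr axial.
by rewrite !trmx_mul trmxK -!mulmxA (mulmxA g^T) SO3_tr_mul // mul1mx.
Qed.

Lemma cross_tr_act g K b i j k : SO3 g ->
  cross_tr (act4 g K) (g *m b *m g^T) i j k =
  \sum_(c < 3) g j c * \sum_(e < 3) g k e * \sum_(a < 3) g i a * cross_tr K b a c e.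
Proof.
move=> hg; rewrite act4_at cross_tr_at1; apply: eq_bigr => c _; congr (_ * _).
by rewrite cross_tr_at2; apply: eq_bigr => e _; rewrite cross_tr_at34.
Qed.

Lemma trHx_act g K b i j k : SO3 g ->
  trHx (act4 g K) (g *m b *m g^T) i j k =
  \sum_(x < 3) \sum_(y < 3) \sum_(z < 3) g i x * g j y * g k z * trHx K b x y z.
Proof. by move=> hg; rewrite !trHxE !cross_tr_act // !sum3 !trHxE; ring. Qed.

Lemma solution_act g K b : SO3 g -> solution K b ->
  solution (act4 g K) (g *m b *m g^T).
Proof.
move=> hg [bT hb]; split; first by rewrite /symmetric2 !trmx_mul trmxK bT mulmxA.
move=> i j k; rewrite trHx_act //.
by rewrite big1 // => x _; rewrite big1 // => y _; rewrite big1 // => z _; rewrite hb mulr0.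
Qed.

(** * The cubic normal form *)

Definition swap_invariant T := [/\ forall i j k l, T i j k l = T j i k l,
  forall i j k l, T i j k l = T i k j l & forall i j k l, T i j k l = T i j l k].

Definition idx4 (i j k l : 'I_3) (m : 'I_4) : 'I_3 :=
  match nat_of_ord m with 0 => i | 1 => j | 2 => k | _ => l end.

Lemma totally_symmetric_swap_invariant T :
  totally_symmetric T -> swap_invariant T.
Proof.
have i4E (a b : nat) : (a < 4)%N -> (b < 4)%N -> ((inord a : 'I_4) == inord b) = (a == b).
  by move=> ha hb; apply/eqP/eqP => [/(congr1 (@nat_of_ord 4))|->//]; rewrite !inordK.
have tappE i j k l : tapp T (idx4 i j k l) = T i j k l.
  by rewrite /tapp /idx4 !inordK.
move=> hT; split=> i j k l; rewrite -tappE.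
- by rewrite -(hT (tperm (inord 0) (inord 1))) /tapp /= !permE /= !i4E //= /idx4 !inordK.
- by rewrite -(hT (tperm (inord 1) (inord 2))) /tapp /= !permE /= !i4E //= /idx4 !inordK.
- by rewrite -(hT (tperm (inord 2) (inord 3))) /tapp /= !permE /= !i4E //= /idx4 !inordK.
Qed.

Lemma act4_swap_invariant g T : swap_invariant T -> swap_invariant (act4 g T).
Proof.
case=> h12 h23 h34; split=> i j k l; rewrite /act4.
- rewrite [RHS]exchange_big; do 4 (apply: eq_bigr => ? _); rewrite h12; ring.
- apply: eq_bigr => a _; rewrite [RHS]exchange_big.
  do 3 (apply: eq_bigr => ? _); rewrite h23; ring.
- do 2 (apply: eq_bigr => ? _); rewrite [RHS]exchange_big.
  do 2 (apply: eq_bigr => ? _); rewrite h34; ring.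
Qed.

Lemma act4_traceless g T : g^T *m g = 1%:M -> traceless T -> traceless (act4 g T).
Proof.
move=> hg hT k l; rewrite /act4.
transitivity (\sum_(a < 3) \sum_(b < 3) (\sum_(i < 3) g i a * g i b) *
  (\sum_(c < 3) \sum_(d < 3) g k c * g l d * T a b c d)).
  by rewrite !sum3; ring.
have gTg a b : \sum_(i < 3) g i a * g i b = (a == b)%:R.
  by move/matrixP/(_ a b): hg; rewrite !mxE => <-; apply: eq_bigr => i _; rewrite mxE.
under eq_bigr do under eq_bigr do rewrite gTg.
under eq_bigr do rewrite sum_delta_l.
transitivity (\sum_(c < 3) \sum_(d < 3) g k c * g l d * \sum_(a < 3) T a a c d).
  by rewrite !sum3; ring.
by rewrite big1 // => c _; rewrite big1 // => d _; rewrite hT mulr0.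
Qed.

Definition signed_perm (s : 'I_3 -> 'I_3) (e : 'I_3 -> R) : 'M[R]_3 :=
  \matrix_(i, j) (e i * (s i == j)%:R).

Lemma act4_signed_perm s e T i j k l :
  act4 (signed_perm s e) T i j k l = e i * e j * e k * e l * T (s i) (s j) (s k) (s l).
Proof.
have se i' (F : 'I_3 -> R) : \sum_a signed_perm s e i' a * F a = e i' * F (s i').
  by under eq_bigr do rewrite mxE -mulrA; rewrite -big_distrr sum_delta_l.
by rewrite act4_at /act_at1 /act_at2 /act_at3 /act_at4 !se; ring.
Qed.

Lemma octahedral_signed_perm s e : (forall i, e i = 1 \/ e i = -1) ->
  SO3 (signed_perm s e) -> octahedral (signed_perm s e).
Proof.
move=> he hSO; split=> // v [w [hw ->]].
exists (signed_perm s e *m w); split; last by rewrite !mul1mx.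
move=> i; rewrite mxE; under eq_bigr do rewrite mxE -mulrA; rewrite -big_distrr /=.
rewrite (sum_delta_l (fun a => w a 0)).
by case: (he i) => ->; case: (hw (s i)) => ->; [left|right|right|left]; ring.
Qed.

Definition pi_turn (m : 'I_3) := signed_perm id (fun i => if i == m then 1 else -1).
Definition cycle3 := signed_perm (fun i => if i == o0 then o1 else if i == o1 then o2 else o0)
  (fun _ => 1).

Lemma octahedral_pi_turn m : octahedral (pi_turn m).
Proof.
apply: octahedral_signed_perm => [i|]; first by case: (i == m); [left|right].
split; last by rewrite det_mx33 !mxE; ord3_cases m; rewrite /= ?eqxx ?ord3_neqE /=; ring.
apply/matrixP => i j; rewrite !mxE sum3 !mxE.
by ord3_cases m; ord3_cases i; ord3_cases j; rewrite /= ?eqxx ?ord3_neqE /=; ring.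
Qed.

Lemma octahedral_cycle3 : octahedral cycle3.
Proof.
apply: octahedral_signed_perm => [i|]; first by left.
split; last by rewrite det_mx33 !mxE /= ?eqxx ?ord3_neqE /=; ring.
apply/matrixP => i j; rewrite !mxE sum3 !mxE.
by ord3_cases i; ord3_cases j; rewrite /= ?eqxx ?ord3_neqE /=; ring.
Qed.

(* Normalized by C_1111 = 1; tracelessness then forces C_1122 = -1/2. *)
Definition cubic_normal (i j k l : 'I_3) : R :=
  if (i == j) && (j == k) && (k == l) then 1
  else if ((i == j) && (k == l)) || ((i == k) && (j == l)) || ((i == l) && (j == k))
  then - 2^-1 else 0.

Definition scaled_cubic (lam : R) : tensor4 R :=
  fun i j k l => lam * cubic_normal i j k l.

Lemma octahedral_invariant_cubic K :
  swap_invariant K -> traceless K ->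
  act4 (pi_turn o0) K = K -> act4 (pi_turn o1) K = K -> act4 cycle3 K = K ->
  K = scaled_cubic (K o0 o0 o0 o0).
Proof.
move=> [h12 h23 h34] hT h0 h1 hc.
have fixed M a b c d : act4 M K = K -> K a b c d = act4 M K a b c d by move->.
have s0 a b c d := fixed _ a b c d h0; have s1 a b c d := fixed _ a b c d h1.
have sc a b c d := fixed _ a b c d hc.
(* r1 .. r9 sort the indices increasingly, giving each component a normal form. *)
have r1 := h12 o1 o0; have r2 := h12 o2 o0; have r3 := h12 o2 o1.
have r4 a := h23 a o1 o0; have r5 a := h23 a o2 o0; have r6 a := h23 a o2 o1.
have r7 a b := h34 a b o1 o0; have r8 a b := h34 a b o2 o0; have r9 a b := h34 a b o2 o1.
have := sc o0 o0 o0 o0; have := sc o1 o1 o1 o1; have := sc o0 o0 o1 o1.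
have := sc o1 o1 o2 o2; have := hT o0 o0.
rewrite sum3 !act4_signed_perm /= ?eqxx ?ord3_neqE /=.
do 6 rewrite ?r1 ?r2 ?r3 ?r4 ?r5 ?r6 ?r7 ?r8 ?r9.
move=> f1 f2 f3 f4 f5; tensor_ext; rewrite /scaled_cubic /cubic_normal.
move: (s0 i j k l) (s1 i j k l); rewrite !act4_signed_perm.
ord3_cases i; ord3_cases j; ord3_cases k; ord3_cases l;
  rewrite /= ?eqxx ?ord3_neqE /=; do 6 rewrite ?r1 ?r2 ?r3 ?r4 ?r5 ?r6 ?r7 ?r8 ?r9;
  move=> z1 z2; lra.
Qed.

(* The rotation about the third axis with cosine 3/5: rational, and not octahedral. *)
Definition rot345 : 'M[R]_3 := \matrix_(i, j)
  if (i == o2) || (j == o2) then (i == j)%:R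
  else if i == j then 3 / 5 else if i == o0 then - (4 / 5) else 4 / 5.

Lemma SO3_rot345 : SO3 rot345.
Proof.
split; last by rewrite det_mx33 !mxE /= ?eqxx ?ord3_neqE /=; field.
apply/matrixP => i j; rewrite !mxE sum3 !mxE.
by ord3_cases i; ord3_cases j; rewrite /= ?eqxx ?ord3_neqE /=; field.
Qed.

Lemma rot345_not_octahedral : ~ octahedral rot345.
Proof.
case=> _ /(_ (1%:M *m const_mx 1)) [].
  by exists (const_mx 1); split => // i; left; rewrite mxE.
move=> s [hs]; rewrite !mul1mx => /matrixP/(_ o0 0).
rewrite !mxE sum3 !mxE /= ?eqxx ?ord3_neqE /= => e.
by case: (hs o0) => h; move: e; rewrite h; lra.
Qed.

Lemma cubic_harmonic_normal_form H P : harmonic4 H -> SO3 P ->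
  (forall g, sym_group H g <-> exists o, octahedral o /\ g = P *m o *m P^T) ->
  exists2 lam, lam != 0 & H = act4 P (scaled_cubic lam).
Proof.
move=> [hS hT] hP hcub; set K := act4 P^T H.
have eH : H = act4 P K by rewrite /K act4M; case: (hP) => -> _; rewrite act4_1.
have Kinv o : octahedral o -> act4 o K = K.
  move=> ho; have [_ hinv] : sym_group H (P *m o *m P^T) by apply/hcub; exists o.
  have eG : act4 (P *m o *m P^T) H = H by tensor_ext; exact: hinv.
  by rewrite /K act4M -{2}eG act4M !mulmxA SO3_tr_mul // mul1mx.
have hK : K = scaled_cubic (K o0 o0 o0 o0).
  apply: octahedral_invariant_cubic; rewrite ?Kinv //.
  - exact/act4_swap_invariant/totally_symmetric_swap_invariant.
  - by apply: act4_traceless => //; rewrite trmxK; case: hP.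
  - exact: octahedral_pi_turn.
  - exact: octahedral_pi_turn.
  - exact: octahedral_cycle3.
exists (K o0 o0 o0 o0); last by rewrite {1}eH {1}hK.
apply/eqP => lam0.
(* H = 0 would be fixed by every rotation, e.g. by a non-octahedral one. *)
have H0 : H = fun _ _ _ _ => 0.
  rewrite eH hK lam0; tensor_ext; rewrite /act4.
  by do 4 (rewrite big1 // => ? _); rewrite /scaled_cubic mul0r mulr0.
have : sym_group H (P *m rot345 *m P^T).
  split; first by apply: SO3_mul; [apply: SO3_mul | apply: SO3_tr] => //; exact: SO3_rot345.
  move=> i j k l; rewrite H0 /act4.
  by do 4 (rewrite big1 // => ? _); rewrite mulr0.
move/hcub => [o [ho e]]; apply: rot345_not_octahedral.
by rewrite -(SO3_conjK rot345 hP) e SO3_conjK.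
Qed.

(** * Solutions in the natural frame *)

Definition triple (c1 c2 c3 : R) (i : 'I_3) : R :=
  if i == o0 then c1 else if i == o1 then c2 else c3.

Definition diag3 (c1 c2 c3 : R) : 'M[R]_3 :=
  \matrix_(i, j) ((i == j)%:R * triple c1 c2 c3 i).

Lemma diag3_sym c1 c2 c3 : symmetric2 (diag3 c1 c2 c3).
Proof.
apply/matrixP => i j; rewrite !mxE /triple.
by ord3_cases i; ord3_cases j; rewrite /= ?eqxx ?ord3_neqE /=; ring.
Qed.

Lemma sym_offdiag_diag3 (b : 'M[R]_3) : symmetric2 b ->
  b o1 o0 = 0 -> b o2 o0 = 0 -> b o2 o1 = 0 ->
  b = diag3 (b o0 o0) (b o1 o1) (b o2 o2).
Proof.
move=> hb h10 h20 h21; have bE i j : b j i = b i j by rewrite -{1}hb mxE.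
apply/matrixP => i j; rewrite !mxE /triple.
by ord3_cases i; ord3_cases j; rewrite /= ?eqxx ?ord3_neqE /=;
  rewrite ?(bE o1 o0) ?(bE o2 o0) ?(bE o2 o1) ?h10 ?h20 ?h21; ring.
Qed.

Lemma solution_scaled_cubicP lam b : lam != 0 ->
  solution (scaled_cubic lam) b <-> exists c1 c2 c3, b = diag3 c1 c2 c3.
Proof.
move=> hlam; split => [[hb hsol]|[c1 [c2 [c3 ->]]]]; last first.
  split=> [|i j k]; first exact: diag3_sym.
  rewrite /trHx /scaled_cubic /cubic_normal !sum3 !leviE !mxE /triple.
  by ord3_cases i; ord3_cases j; ord3_cases k; rewrite /= ?eqxx ?ord3_neqE /=; ring.
have bE i j : b j i = b i j by rewrite -{1}hb mxE.
have := hsol o0 o0 o1; have := hsol o0 o0 o2; have := hsol o0 o1 o1.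
rewrite /trHx /scaled_cubic /cubic_normal !sum3 !leviE /= ?eqxx ?ord3_neqE /=.
rewrite (bE o1 o0) (bE o2 o0) (bE o2 o1) => e1 e2 e3.
have offdiag0 x : lam * x = 0 -> x = 0 by move/eqP; rewrite mulf_eq0 (negbTE hlam) => /eqP.
exists (b o0 o0), (b o1 o1), (b o2 o2); apply: sym_offdiag_diag3 => //;
  apply: offdiag0; nra.
Qed.

Lemma row_mul_diag3 (x : 'rV[R]_3) c1 c2 c3 j :
  (x *m diag3 c1 c2 c3) 0 j = x 0 j * triple c1 c2 c3 j.
Proof. by rewrite !mxE sum3 !mxE /triple; ord3_cases j; rewrite /= ?eqxx ?ord3_neqE /=; ring. Qed.

Lemma diag3_mul_col (x : 'cV[R]_3) c1 c2 c3 j :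
  (diag3 c1 c2 c3 *m x) j 0 = triple c1 c2 c3 j * x j 0.
Proof. by rewrite !mxE sum3 !mxE /triple; ord3_cases j; rewrite /= ?eqxx ?ord3_neqE /=; ring. Qed.

Lemma SO3_entry_bound P i j : SO3 P -> `|P i j| <= 1.
Proof.
move/SO3_tr_mul/matrixP/(_ j j); rewrite !mxE sum3 !mxE eqxx /= => e.
have := sqr_ge0 (P o0 j); have := sqr_ge0 (P o1 j); have := sqr_ge0 (P o2 j).
by rewrite ler_norml; ord3_cases i => *; apply/andP; split; nra.
Qed.

Lemma SO3_conj_diag_lt P (X : 'M[R]_3) e k : SO3 P ->
  (forall q r, `|X q r| < e) -> `|(P^T *m X *m P) k k| < 9%:R * e.
Proof.
move=> hP hX.
have hb q r : - e < P q k * X q r * P r k < e.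
  rewrite -ltr_norml !normrM; apply: le_lt_trans (hX q r).
  apply: le_trans (ler_piMr (mulr_ge0 (normr_ge0 _) (normr_ge0 _))
    (SO3_entry_bound r k hP)) _.
  exact: ler_piMl (normr_ge0 _) (SO3_entry_bound q k hP).
have [a1 a2] := andP (hb o0 o0); have [a3 a4] := andP (hb o0 o1);
have [a5 a6] := andP (hb o0 o2); have [a7 a8] := andP (hb o1 o0);
have [b1 b2] := andP (hb o1 o1); have [b3 b4] := andP (hb o1 o2);
have [b5 b6] := andP (hb o2 o0); have [b7 b8] := andP (hb o2 o1);
have [c1 c2] := andP (hb o2 o2).
by rewrite ltr_norml; do 3 rewrite ?mxE ?sum3; apply/andP; split; lra.
Qed.

Lemma exists_small_avoiding (f1 f2 f3 e : R) : 0 < e ->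
  exists t, [/\ 0 < t, 4%:R * t <= e, t != f1, t != f2 & t != f3].
Proof.
move=> he; pose good t := [&& t != f1, t != f2 & t != f3].
have bad t : ~~ good t -> [\/ t = f1, t = f2 | t = f3].
  by rewrite /good; case: eqVneq => [->|_]; [constructor 1|case: eqVneq => [->|_];
    [constructor 2|case: eqVneq => [->|//]; constructor 3]].
(* Four distinct candidates cannot all hit one of three values. *)
have [t [t0 te /and3P [n1 n2 n3]]] :
    exists t, [/\ 0 < t, 4%:R * t <= e & good t].
  case: (boolP (good (e / 4%:R))) => [g|/bad g1]; first by exists (e / 4%:R); split => //; lra.
  case: (boolP (good (e / 8%:R))) => [g|/bad g2]; first by exists (e / 8%:R); split => //; lra.
  case: (boolP (good (e / 16%:R))) => [g|/bad g3]; first by exists (e / 16%:R); split => //; lra.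
  case: (boolP (good (e / 32%:R))) => [g|/bad g4]; first by exists (e / 32%:R); split => //; lra.
  by exfalso; case: g1 => x1; case: g2 => x2; case: g3 => x3; case: g4 => x4; lra.
by exists t.
Qed.

Definition sign_entries (M : 'M[R]_3) :=
  forall i j, [\/ M i j = 0, M i j = 1 | M i j = -1].

Lemma eigvec_distinct_sign (c1 c2 c3 l x y z : R) :
  c1 != c2 -> c1 != c3 -> c2 != c3 ->
  c1 * x = l * x -> c2 * y = l * y -> c3 * z = l * z -> x * x + y * y + z * z = 1 ->
  [/\ [\/ x = 0, x = 1 | x = -1], [\/ y = 0, y = 1 | y = -1] & [\/ z = 0, z = 1 | z = -1]].
Proof.
have eig0 c u : c * u = l * u -> u = 0 \/ c = l.
  by move/eqP; rewrite -subr_eq0 -mulrBl mulf_eq0 subr_eq0 => /orP [/eqP|/eqP]; auto.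
have sq1 (u : R) : u * u = 1 -> [\/ u = 0, u = 1 | u = -1].
  by move/eqP; rewrite -expr2 sqrf_eq1 => /orP [/eqP|/eqP]; [constructor 2|constructor 3].
move=> n12 n13 n23 hx hy hz.
case: (eig0 _ _ hx) => [x0|lx]; case: (eig0 _ _ hy) => [y0|ly];
  case: (eig0 _ _ hz) => [z0|lz]; rewrite ?x0 ?y0 ?z0 ?mul0r ?addr0 ?add0r;
  try by [move=> /eqP; rewrite eq_sym oner_eq0 | move/sq1; split=> //; constructor 1].
all: by move: n12 n13 n23; rewrite ?lx ?ly ?lz eqxx.
Qed.

Lemma sign_dot (x y z s1 s2 s3 : R) :
  [\/ x = 0, x = 1 | x = -1] -> [\/ y = 0, y = 1 | y = -1] -> [\/ z = 0, z = 1 | z = -1] ->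
  x * x + y * y + z * z = 1 ->
  s1 = 1 \/ s1 = -1 -> s2 = 1 \/ s2 = -1 -> s3 = 1 \/ s3 = -1 ->
  x * s1 + y * s2 + z * s3 = 1 \/ x * s1 + y * s2 + z * s3 = -1.
Proof.
case=> ->; case=> ->; case=> -> hn; try by exfalso; lra.
all: by case=> ->; case=> ->; case=> ->; first [left; lra | right; lra].
Qed.

Lemma sign_vec_mul M s : sign_entries M -> M *m M^T = 1%:M ->
  sign_vec s -> sign_vec (M *m s).
Proof.
move=> hM /matrixP hMM hs i; rewrite mxE sum3.
have := hMM i i; rewrite !mxE sum3 !mxE eqxx => hn.
by apply: sign_dot; rewrite ?hM ?hs.
Qed.

Lemma cube_vertex_change P U v : SO3 P -> SO3 U -> sign_entries (P^T *m U) ->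
  cube_vertex U v <-> cube_vertex P v.
Proof.
move=> hP hU hM; have [P1 _] := hP; have [U1 _] := hU.
split=> -[s [hs ->]].
  exists (P^T *m U *m s); split; last by rewrite !mulmxA P1 mul1mx.
  apply: sign_vec_mul => //.
  by rewrite trmx_mul trmxK mulmxA -(mulmxA _ U) U1 mulmx1 SO3_tr_mul.
exists ((P^T *m U)^T *m s); split; last by rewrite trmx_mul trmxK !mulmxA U1 mul1mx.
apply: sign_vec_mul => //; first by move=> i j; rewrite mxE.
by rewrite trmxK trmx_mul trmxK mulmxA -(mulmxA _ P) P1 mulmx1 SO3_tr_mul.
Qed.

Lemma cube_rot_conj P g : SO3 P ->
  (exists o, octahedral o /\ g = P *m o *m P^T) <-> cube_rot P g.
Proof.
move=> hP; split=> [[o [[ho hv] ->]]|[hg hv]].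
  split=> [|v [s [hs ->]]]; first by apply: SO3_mul; [apply: SO3_mul | apply: SO3_tr].
  have [s' [hs' e]] := hv (1%:M *m s) (ex_intro _ s (conj hs erefl)).
  exists s'; split=> //; move: e; rewrite !mul1mx => e.
  by rewrite -!mulmxA (mulmxA P^T) SO3_tr_mul // mul1mx e.
exists (P^T *m g *m P); split; last by rewrite SO3_conjVK.
split=> [|v [s [hs ->]]]; first by apply: SO3_mul; [apply: SO3_mul; [apply: SO3_tr|] |].
have [s' [hs' e]] := hv (P *m s) (ex_intro _ s (conj hs erefl)).
exists s'; split=> //.
by rewrite !mul1mx -!mulmxA e mulmxA SO3_tr_mul // mul1mx.
Qed.

Section RotatedFrame.
Variable P : 'M[R]_3.
Hypothesis hP : SO3 P.

Lemma eigenvalue_conj_diag3 c1 c2 c3 j :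
  eigenvalue (P *m diag3 c1 c2 c3 *m P^T) (triple c1 c2 c3 j).
Proof.
apply/eigenvalueP; exists (delta_mx 0 j *m P^T).
  have e : delta_mx 0 j *m diag3 c1 c2 c3 = triple c1 c2 c3 j *: delta_mx (0 : 'I_1) j.
    apply/matrixP => a b; rewrite (ord1 a) row_mul_diag3 !mxE.
    by case: (eqVneq b j) => [->|/negbTE bj]; rewrite ?bj ?eqxx /=; ring.
  by rewrite !mulmxA -(mulmxA _ P^T P) SO3_tr_mul // mulmx1 e scalemxAl.
apply: contraTneq isT => h.
have : delta_mx 0 j *m P^T *m P = delta_mx (0 : 'I_1) j.
  by rewrite -mulmxA SO3_tr_mul // mulmx1.
rewrite h mul0mx => /matrixP/(_ 0 j); rewrite !mxE !eqxx /= => /eqP.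
by rewrite eq_sym oner_eq0.
Qed.

Lemma eigenvalue_conj_diag3_inv c1 c2 c3 x :
  eigenvalue (P *m diag3 c1 c2 c3 *m P^T) x -> [\/ x = c1, x = c2 | x = c3].
Proof.
move=> /eigenvalueP [v hv vnz]; set w := v *m P.
have hw : w *m diag3 c1 c2 c3 = x *: w.
  by rewrite /w scalemxAl -hv !mulmxA -(mulmxA _ P^T P) SO3_tr_mul // mulmx1.
have wnz : w != 0.
  apply: contraNneq vnz => w0; have : w *m P^T = v.
    by rewrite /w -mulmxA; case: hP => -> _; rewrite mulmx1.
  by rewrite w0 mul0mx => <-.
have [j wj] : exists j, w 0 j != 0.
  apply/existsP; apply: contraR wnz => /existsPn w0.
  by apply/eqP/matrixP => i j; rewrite (ord1 i) [RHS]mxE; exact/eqP/negPn/w0.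
move/matrixP/(_ 0 j): hw; rewrite row_mul_diag3 [RHS]mxE mulrC => /(mulIf wj) <-.
by rewrite /triple; ord3_cases j; rewrite /= ?eqxx ?ord3_neqE /=;
  [apply: Or31 | apply: Or32 | apply: Or33].
Qed.

Lemma orthotropic_conj_diag3 c1 c2 c3 :
  orthotropic (P *m diag3 c1 c2 c3 *m P^T) <-> [/\ c1 != c2, c1 != c3 & c2 != c3].
Proof.
split=> [[_ [l1 [l2 [l3 [[n12 n13 n23] [e1 e2 e3]]]]]]|[n12 n13 n23]].
  move: n12 n13 n23.
  case: (eigenvalue_conj_diag3_inv e1) => ->; case: (eigenvalue_conj_diag3_inv e2) => ->;
  case: (eigenvalue_conj_diag3_inv e3) => ->; rewrite ?eqxx // => n12 n13 n23;
  by split; rewrite // eq_sym.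
split; first by rewrite /symmetric2 !trmx_mul trmxK diag3_sym mulmxA.
exists c1, c2, c3; split; first by split.
by split; [apply: (eigenvalue_conj_diag3 _ _ _ o0) | apply: (eigenvalue_conj_diag3 _ _ _ o1)
  | apply: (eigenvalue_conj_diag3 _ _ _ o2)].
Qed.

Lemma eigenbasis_sign_entries U c1 c2 c3 :
  [/\ c1 != c2, c1 != c3 & c2 != c3] ->
  natural_basis2 (P *m diag3 c1 c2 c3 *m P^T) U -> sign_entries (P^T *m U).
Proof.
move=> [n12 n13 n23] [hU hcol] k j; set M := P^T *m U.
have [l hl] := hcol j.
have eig m : triple c1 c2 c3 m * M m j = l * M m j.
  have : diag3 c1 c2 c3 *m col j M = l *: col j M.
    have -> : col j M = P^T *m col j U by rewrite !colE mulmxA.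
    by rewrite scalemxAr -hl !mulmxA SO3_tr_mul // mul1mx.
  by move/matrixP/(_ m 0); rewrite diag3_mul_col !mxE.
have hn : M o0 j * M o0 j + M o1 j * M o1 j + M o2 j * M o2 j = 1.
  have : M^T *m M = 1%:M.
    by rewrite trmx_mul trmxK mulmxA -(mulmxA _ P) (proj1 hP) mulmx1 SO3_tr_mul.
  by move/matrixP/(_ j j); rewrite !mxE sum3 !mxE eqxx.
move: (eig o0) (eig o1) (eig o2); rewrite /triple /= => e0 e1 e2.
have [s0 s1 s2] := eigvec_distinct_sign n12 n13 n23 e0 e1 e2 hn.
by ord3_cases k.
Qed.

Section CubicSolutions.
Variable lam : R.
Hypothesis hlam : lam != 0.
Local Notation Hc := (act4 P (scaled_cubic lam)).

Lemma solution_cubicP a :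
  solution Hc a <-> exists c1 c2 c3, a = P *m diag3 c1 c2 c3 *m P^T.
Proof.
split=> [ha|[c1 [c2 [c3 ->]]]]; last first.
  by apply: solution_act => //; apply/solution_scaled_cubicP => //; exists c1, c2, c3.
have := solution_act (SO3_tr hP) ha.
rewrite act4M SO3_tr_mul // act4_1 trmxK => /(solution_scaled_cubicP _ hlam).
by case=> c1 [c2 [c3 e]]; exists c1, c2, c3; rewrite -e SO3_conjVK.
Qed.

Lemma conj_diag3_lincomb c1 c2 c3 :
  c1 *: (P *m diag3 1 0 0 *m P^T) + c2 *: (P *m diag3 0 1 0 *m P^T)
    + c3 *: (P *m diag3 0 0 1 *m P^T) = P *m diag3 c1 c2 c3 *m P^T.
Proof. by apply/matrixP => i j; do 5 rewrite ?mxE ?sum3; rewrite /triple /=; ring. Qed.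

Lemma solution_dim3 : dim3_subspace (solution Hc).
Proof.
exists (P *m diag3 1 0 0 *m P^T), (P *m diag3 0 1 0 *m P^T), (P *m diag3 0 0 1 *m P^T).
split; try by apply/solution_cubicP; do 3 eexists.
  move=> c1 c2 c3; rewrite conj_diag3_lincomb => /(congr1 (fun a => P^T *m a *m P)).
  rewrite SO3_conjK // mulmx0 mul0mx => /matrixP e.
  by split; [move: (e o0 o0) | move: (e o1 o1) | move: (e o2 o2)];
    rewrite !mxE /triple /= => <-; ring.
move=> a; rewrite solution_cubicP.
by split=> -[c1 [c2 [c3 ->]]]; exists c1, c2, c3; rewrite conj_diag3_lincomb.
Qed.

Lemma orthotropic_solution_open :
  open_in (solution Hc) (fun a => solution Hc a /\ orthotropic a).
Proof.
move=> a _ [/solution_cubicP [c1 [c2 [c3 ->]]]].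
move=> /orthotropic_conj_diag3 [n12 n13 n23].
set d := Num.min `|c1 - c2| (Num.min `|c1 - c3| `|c2 - c3|).
have d_gt0 : 0 < d by rewrite /d !lt_min !normr_gt0 !subr_eq0 n12 n13 n23.
have [d12 d13 d23] : [/\ d <= `|c1 - c2|, d <= `|c1 - c3| & d <= `|c2 - c3|].
  by rewrite /d !ge_min !lexx ?orbT.
exists (d / 20%:R) => [|b hb close]; first by rewrite divr_gt0 // ltr0n.
have [c1' [c2' [c3' eb]]] := (solution_cubicP b).1 hb.
split=> //; rewrite eb; apply/orthotropic_conj_diag3.
(* Conjugating back by P moves each c_k by less than 9 d / 20 < d / 2. *)
have near k : `|triple c1' c2' c3' k - triple c1 c2 c3 k| < 9%:R * (d / 20%:R).
  have <- : (P^T *m (b - P *m diag3 c1 c2 c3 *m P^T) *m P) k k =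
      triple c1' c2' c3' k - triple c1 c2 c3 k.
    by rewrite mulmxBr mulmxBl eb !SO3_conjK // !mxE !eqxx !mul1r.
  by apply: SO3_conj_diag_lt => // q r; rewrite mxE [X in _ + X]mxE distrC; exact: close.
move: (near o0) (near o1) (near o2); rewrite /triple /= !ltr_norml.
move=> /andP [k1 k2] /andP [k3 k4] /andP [k5 k6].
by split; apply/negP => /eqP E; [move: d12 | move: d13 | move: d23];
  rewrite ler_normr => /orP [] h; lra.
Qed.

Lemma orthotropic_solution_dense :
  dense_in (solution Hc) (fun a => solution Hc a /\ orthotropic a).
Proof.
move=> a /solution_cubicP [c1 [c2 [c3 ->]]] e e_gt0.
(* Perturb by diag(0, t, 2 t), with t avoiding the values where two entries collide. *)
have [t [t_gt0 te n1 n2 n3]] :=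
  exists_small_avoiding (c1 - c2) ((c1 - c3) / 2%:R) (c2 - c3) e_gt0.
exists (P *m diag3 c1 (c2 + t) (c3 + 2%:R * t) *m P^T); split.
- by apply/solution_cubicP; do 3 eexists.
- split; first by apply/solution_cubicP; do 3 eexists.
  apply/orthotropic_conj_diag3.
  by split; apply/negP => /eqP E; [move/eqP: n1 | move/eqP: n2 | move/eqP: n3]; apply; lra.
move=> i j.
have -> : (P *m diag3 c1 c2 c3 *m P^T) i j - (P *m diag3 c1 (c2 + t) (c3 + 2%:R * t) *m P^T) i j
    = - (t * (P i o1 * P j o1) + 2%:R * t * (P i o2 * P j o2)).
  by do 4 rewrite ?mxE ?sum3; rewrite /triple /=; ring.
have u1 : `|P i o1 * P j o1| <= 1 by rewrite normrM mulr_ile1 ?SO3_entry_bound.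
have u2 : `|P i o2 * P j o2| <= 1 by rewrite normrM mulr_ile1 ?SO3_entry_bound.
move: u1 u2; rewrite normrN !ler_norml ltr_norml => /andP [u1 u1'] /andP [u2 u2'].
by apply/andP; split; nra.
Qed.

Lemma natural_basis_orthotropic_solution :
  (forall g, sym_group Hc g <-> exists o, octahedral o /\ g = P *m o *m P^T) ->
  forall a U, solution Hc a -> orthotropic a -> natural_basis2 a U -> natural_basis4 Hc U.
Proof.
move=> hcub a U /solution_cubicP [c1 [c2 [c3 ->]]].
move=> /orthotropic_conj_diag3 hc hU; have [hUSO _] := hU.
have hM := eigenbasis_sign_entries hc hU.
split=> // g; rewrite hcub cube_rot_conj //.
have hvU v := cube_vertex_change v hP hUSO hM.
by split=> -[hg hv]; split=> // v; [rewrite !hvU | rewrite -!hvU]; exact: hv.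
Qed.

End CubicSolutions.
End RotatedFrame.
End Tensors.

Theorem mainTheorem1 (R : realType) (H : tensor4 R) :
  harmonic4 H -> cubic H ->
  [/\ dim3_subspace (solution H),
      open_in (solution H) (fun a => solution H a /\ orthotropic a),
      dense_in (solution H) (fun a => solution H a /\ orthotropic a) &
      forall a U : 'M[R]_3, solution H a -> orthotropic a ->
        natural_basis2 a U -> natural_basis4 H U].
Proof.
move=> hH [P [hP hcub]].
have [lam hlam eH] := cubic_harmonic_normal_form hH hP hcub.
subst H; split.
- exact: solution_dim3.
- exact: orthotropic_solution_open.
- exact: orthotropic_solution_dense.
- exact: natural_basis_orthotropic_solution.
Qed.
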